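(* Let $C:\{0,1\}^n\to\{0,1\}^m$ be any map, $q\ge1$, $\varepsilon\in(0,1/2]$. For every $Q\in\binom{[2m]}{q}$, the set $H_Q=\{i\in[n]:Q\in\mathrm{Good}_i\}$ satisfies $|H_Q|\le q/(1-\mathcal H(1/2+\varepsilon/4))$.
   Context: $\mathcal H(p)=-p\log_2p-(1-p)\log_2(1-p)$ is the binary entropy function. For $x\in\{0,1\}^n$, $C'(x)\in\{0,1\}^{2m}$ is $C(x)$ followed by $m$ independent uniformly random bits (independent of $x$). For $i\in[n]$, $\mathrm{Good}_i$ is the set of $Q\in\binom{[2m]}{q}$ for which there exists $f:\{0,1\}^q\to\{0,1\}$ with $\Pr[f(C'(x)_Q)=x_i]\ge1/2+\varepsilon/4$, the probability taken over uniform $x\in\{0,1\}^n$ and the padded random bits; $C'(x)_Q$ is the restriction of $C'(x)$ to $Q$ in increasing order. *)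

From mathcomp Require Import all_boot all_order all_algebra.
From mathcomp Require Import boolp reals exp.
Set Implicit Arguments. Unset Strict Implicit. Unset Printing Implicit Defensive.
Import Order.TTheory GRing.Theory Num.Theory.
Local Open Scope ring_scope.

Definition log2 {R : realType} (x : R) : R := ln x / ln 2.
Definition binEnt {R : realType} (p : R) : R :=
  - p * log2 p - (1 - p) * log2 (1 - p).

(* C'(x) = C(x) followed by the m padding bits r; positions of [2m] are 'I_(m+m) *)
Definition pad (n m : nat) (C : {ffun 'I_n -> bool} -> {ffun 'I_m -> bool})
  (x : {ffun 'I_n -> bool}) (r : {ffun 'I_m -> bool}) : {ffun 'I_(m + m) -> bool} :=
  [ffun j => match split j with inl a => C x a | inr b => r b end].

(* w_Q : restriction of w to Q, listed in increasing order (enum of a set of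
   ordinals is increasing); indexed by 'I_#|Q| *)
Definition restr (k : nat) (Q : {set 'I_k}) (w : {ffun 'I_k -> bool})
  : {ffun 'I_#|Q| -> bool} := [ffun j => w (enum_val j)].

Definition succProb {R : realType} (n m : nat)
  (C : {ffun 'I_n -> bool} -> {ffun 'I_m -> bool}) (Q : {set 'I_(m + m)})
  (f : {ffun 'I_#|Q| -> bool} -> bool) (i : 'I_n) : R :=
  (#|[set xr : {ffun 'I_n -> bool} * {ffun 'I_m -> bool} |
      f (restr Q (pad C xr.1 xr.2)) == xr.1 i]|)%:R
  / (#|{: {ffun 'I_n -> bool} * {ffun 'I_m -> bool}}|)%:R.

Definition Good {R : realType} (n m q : nat)
  (C : {ffun 'I_n -> bool} -> {ffun 'I_m -> bool}) (eps : R) (i : 'I_n)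
  (Q : {set 'I_(m + m)}) : Prop :=
  #|Q| = q /\ exists f : {ffun 'I_#|Q| -> bool} -> bool,
    1 / 2 + eps / 4 <= succProb C f i.

Definition HQ {R : realType} (n m q : nat)
  (C : {ffun 'I_n -> bool} -> {ffun 'I_m -> bool}) (eps : R)
  (Q : {set 'I_(m + m)}) : {set 'I_n} :=
  [set i | `[< Good q C eps i Q >] ].

From mathcomp Require Import all_boot all_order all_algebra.
From mathcomp Require Import boolp reals exp.
From mathcomp Require Import lra ring.
Import Order.TTheory GRing.Theory Num.Theory.
Local Open Scope ring_scope.

(* Fix predictors g_i, one per good index i, with success probability at
   least p.  For every value y of the q observed bits, the product weight
   G_y(x) = prod_(i in H) (2p if g_i(y) = x_i else 2(1-p)) has average 1 over
   x, so summing G_{y(w)}(x(w)) over all (x, r) is at most 2^q times the number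
   of pairs and, by concavity of ln, the average of ln G_{y(w)}(x(w)) is at most
   q ln 2.  On the other hand that average splits over the coordinates of H,
   and each good coordinate contributes at least
   p ln (2p) + (1-p) ln (2(1-p)) = (1 - H(p)) ln 2. *)

Section LnFacts.
Context {R : realType}.

Lemma ln_le_subr1 (x : R) : 0 < x -> ln x <= x - 1.
Proof.
move=> x_gt0; have := @expR_ge1Dx R (ln x).
by rewrite lnK ?posrE //; lra.
Qed.

Lemma ln_lt_subr1 (x : R) : 0 < x -> x != 1 -> ln x < x - 1.
Proof.
move=> x_gt0 x_neq1; have lnx_neq0 : ln x != 0 by rewrite ln_eq0.
have := expR_gt1Dx lnx_neq0; rewrite lnK ?posrE //; lra.
Qed.

Lemma ln_prod (I : finType) (P : pred I) (F : I -> R) :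
  (forall i, P i -> 0 < F i) ->
  ln (\prod_(i | P i) F i) = \sum_(i | P i) ln (F i).
Proof.
move=> F_gt0.
suff [] : 0 < \prod_(i | P i) F i /\
          ln (\prod_(i | P i) F i) = \sum_(i | P i) ln (F i) by [].
apply: (big_rec2 (fun s pr => 0 < pr /\ ln pr = s)); first by rewrite ln1.
move=> i s pr Pi [pr_gt0 <-]; have Fi_gt0 := F_gt0 i Pi.
by rewrite mulr_gt0 // lnM.
Qed.

Lemma sum_ln_le (T : finType) (h : T -> R) (c : R) :
  0 < c -> (forall t, 0 < h t) -> \sum_t h t <= c * #|T|%:R ->
  \sum_t ln (h t) <= #|T|%:R * ln c.
Proof.
move=> c_gt0 h_gt0 sum_h.
have : \sum_t (ln (h t) - ln c) <= \sum_t (h t / c - 1).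
  by apply: ler_sum => t _; rewrite -ln_div ?posrE // ln_le_subr1 // divr_gt0.
rewrite !sumrB -mulr_suml !sumr_const -mulr_natl.
have : (\sum_t h t) / c <= #|T|%:R by rewrite ler_pdivrMr // mulrC.
lra.
Qed.

Lemma log2_exp2 (k : nat) : log2 (2 ^+ k : R) = k%:R.
Proof.
have ln2_gt0 : 0 < ln (2 : R) by apply: ln_gt0; lra.
by rewrite /log2 lnXn // mulrnAl divff // gt_eqF.
Qed.

End LnFacts.

Section BinaryEntropy.
Context {R : realType} (p : R).
Hypotheses (p_gt0 : 0 < p) (p_lt1 : p < 1).

Lemma one_sub_binEnt :
  (1 - binEnt p) * ln 2 = p * ln (2 * p) + (1 - p) * ln (2 * (1 - p)).
Proof.
have ln2_gt0 : 0 < ln (2 : R) by apply: ln_gt0; lra.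
have q_gt0 : 0 < 1 - p by rewrite subr_gt0.
rewrite /binEnt /log2 !lnM ?posrE //.
by field; rewrite gt_eqF.
Qed.

(* Gibbs' inequality against the uniform distribution on {0,1}. *)
Lemma binEnt_lt1 : p != 1 / 2 -> binEnt p < 1.
Proof.
move=> p_neq_half; have ln2_gt0 : 0 < ln (2 : R) by apply: ln_gt0; lra.
suff : 0 < (1 - binEnt p) * ln 2 by rewrite pmulr_lgt0 // subr_gt0.
have gibbs (a : R) : 0 < a -> 2 * a != 1 -> a - 1 / 2 < a * ln (2 * a).
  move=> a_gt0 a_neq.
  have inv_gt0 : 0 < (2 * a)^-1 by rewrite invr_gt0; lra.
  have inv_neq1 : (2 * a)^-1 != 1 by rewrite invr_eq1.
  have := ln_lt_subr1 _ inv_gt0 inv_neq1; rewrite lnV ?posrE; last by lra.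
  move=> ln_lt; have : 0 < a * ((2 * a)^-1 - 1 + ln (2 * a)).
    by apply: mulr_gt0 => //; lra.
  have : a * (2 * a)^-1 = 1 / 2 by field; rewrite gt_eqF.
  lra.
have neq_half (a : R) : a != 1 / 2 -> 2 * a != 1.
  by apply: contra => /eqP a2; apply/eqP; lra.
have h1 := gibbs p p_gt0 (neq_half _ p_neq_half).
have q_gt0 : 0 < 1 - p by rewrite subr_gt0.
have q_neq_half : 1 - p != 1 / 2.
  by apply: contra p_neq_half => /eqP e; apply/eqP; lra.
have h2 := gibbs (1 - p) q_gt0 (neq_half _ q_neq_half).
rewrite one_sub_binEnt; lra.
Qed.

End BinaryEntropy.

Section Prediction.
Context {R : realType}.

Lemma sum_prod_weight (I : finType) (H : {set I}) (f : I -> bool -> R) :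
  (forall i, f i true + f i false = 2) ->
  \sum_(x : {ffun I -> bool}) \prod_(i in H) f i (x i)
    = #|{: {ffun I -> bool}}|%:R.
Proof.
move=> f_sum2.
under eq_bigr do rewrite big_mkcond.
rewrite -(bigA_distr_bigA (fun i b => if i \in H then f i b else 1)) /=.
rewrite (eq_bigr (fun=> 2)) => [|i _]; last first.
  by rewrite big_bool; case: (i \in H) => //; apply: f_sum2.
by rewrite card_ffun card_bool natrX -prodr_const; apply: eq_bigl.
Qed.

Lemma sum_weight_le (X S Y : finType) (G : Y -> X -> R) (y : X * S -> Y) :
  (forall v x, 0 <= G v x) -> (forall v, \sum_x G v x = #|X|%:R) ->
  \sum_(w : X * S) G (y w) w.1 <= #|Y|%:R * #|{: X * S}|%:R.
Proof.
move=> G_ge0 G_sum.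
apply: (@le_trans _ _ (\sum_(w : X * S) \sum_v G v w.1)).
  apply: ler_sum => w _; rewrite (bigD1 (y w)) //= lerDl.
  by apply: sumr_ge0.
rewrite exchange_big /= (eq_bigr (fun=> #|{: X * S}|%:R)).
  by rewrite sumr_const mulr_natl.
move=> v _; rewrite -(pair_bigA _ (fun x (s : S) => G v x)) /=.
under eq_bigr do rewrite sumr_const.
by rewrite sumrMnl G_sum card_prod natrM mulr_natr.
Qed.

Lemma sum_if_ge (T : finType) (P : pred T) (A B p : R) :
  B <= A -> p * #|T|%:R <= #|[set t | P t]|%:R ->
  #|T|%:R * (p * A + (1 - p) * B) <= \sum_t (if P t then A else B).
Proof.
move=> BA card_P.
have -> : \sum_t (if P t then A else B) = \sum_t (B + (P t)%:R * (A - B)).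
  by apply: eq_bigr => t _; case: (P t) => /=; ring.
rewrite big_split /= -mulr_suml sumr_const -mulr_natl.
have -> : \sum_t ((P t)%:R : R) = #|[set t | P t]|%:R.
  rewrite -sum1_card natr_sum [RHS]big_mkcond /=.
  by apply: eq_bigr => t _; rewrite inE; case: (P t).
have : 0 <= (#|[set t | P t]|%:R - p * #|T|%:R) * (A - B).
  by apply: mulr_ge0; lra.
lra.
Qed.

Theorem card_predicted_bits (I S Y : finType) (y : {ffun I -> bool} * S -> Y)
    (g : I -> Y -> bool) (H : {set I}) (p : R) :
  (0 < #|S|)%N -> 1 / 2 <= p -> p < 1 ->
  (forall i, i \in H ->
     p * #|{: {ffun I -> bool} * S}|%:R
       <= #|[set w | g i (y w) == w.1 i]|%:R) ->
  #|H|%:R * (1 - binEnt p) <= log2 #|Y|%:R.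
Proof.
move=> S_gt0 p_ge p_lt1 g_good.
set N : R := #|{: {ffun I -> bool} * S}|%:R.
have N_gt0 : 0 < N.
  rewrite ltr0n card_prod muln_gt0 S_gt0 andbT.
  by apply/card_gt0P; exists [ffun=> true].
have ln2_gt0 : 0 < ln (2 : R) by apply: ln_gt0; lra.
pose f v i b : R := if g i v == b then 2 * p else 2 * (1 - p).
have f_gt0 v i b : 0 < f v i b by rewrite /f; case: (_ == _); lra.
pose G v (x : {ffun I -> bool}) := \prod_(i in H) f v i (x i).
have G_gt0 v x : 0 < G v x by apply: prodr_gt0.
have Y_gt0 : (0 < #|Y|)%N.
  by apply/card_gt0P; exists (y ([ffun=> true], enum_val (Ordinal S_gt0))).
have lnG_le : \sum_w ln (G (y w) w.1) <= N * ln #|Y|%:R.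
  apply: sum_ln_le => //; first by rewrite ltr0n.
  apply: sum_weight_le => [v x|v]; first exact: ltW.
  apply: (sum_prod_weight _ H (f v)) => i.
  by rewrite /f; case: (g i v) => /=; lra.
have lnG_ge : #|H|%:R * (N * ((1 - binEnt p) * ln 2))
              <= \sum_w ln (G (y w) w.1).
  have -> : \sum_w ln (G (y w) w.1)
      = \sum_w \sum_(i in H) ln (f (y w) i (w.1 i)).
    by apply: eq_bigr => w _; apply: ln_prod.
  rewrite exchange_big /= mulr_natl -sumr_const; apply: ler_sum => i iH.
  rewrite one_sub_binEnt //; last by lra.
  have -> : \sum_w ln (f (y w) i (w.1 i))
      = \sum_w (if g i (y w) == w.1 i then ln (2 * p) else ln (2 * (1 - p))).
    by apply: eq_bigr => w _; rewrite /f; case: (_ == _).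
  by apply: sum_if_ge; [rewrite ler_ln ?posrE; lra | exact: g_good].
rewrite /log2 ler_pdivlMr // -(ler_pM2l N_gt0); lra.
Qed.

End Prediction.

Theorem mainTheorem10 (R : realType) (n m q : nat)
  (C : {ffun 'I_n -> bool} -> {ffun 'I_m -> bool}) (eps : R) :
  (1 <= q)%N -> 0 < eps -> eps <= 1 / 2 ->
  forall Q : {set 'I_(m + m)}, #|Q| = q ->
    (#|HQ q C eps Q|)%:R <= q%:R / (1 - binEnt (1 / 2 + eps / 4)).
Proof.
move=> _ eps_gt0 eps_le Q card_Q.
set p := 1 / 2 + eps / 4.
have /choice [g g_good] : forall i, exists f : {ffun 'I_#|Q| -> bool} -> bool,
    i \in HQ q C eps Q -> p <= succProb C f i.
  move=> i; case: (boolP (i \in HQ q C eps Q)) => [|_].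
    by rewrite inE => /asboolP [_ [f f_good]]; exists f.
  by exists (fun=> true).
have one_sub_binEnt_gt0 : 0 < 1 - binEnt p by rewrite subr_gt0 binEnt_lt1 /p; lra.
have card_Y : #|{: {ffun 'I_#|Q| -> bool}}|%:R = 2 ^+ q :> R.
  by rewrite card_ffun card_bool card_ord card_Q natrX.
rewrite ler_pdivlMr // -[q%:R]log2_exp2 -card_Y.
apply: (card_predicted_bits _ _ _ (fun w => restr Q (pad C w.1 w.2)) g).
- by rewrite card_ffun card_bool expn_gt0.
- by rewrite /p; lra.
- by rewrite /p; lra.
- move=> i /g_good; rewrite /succProb ler_pdivlMr // ltr0n card_prod.
  by rewrite muln_gt0 !card_ffun !card_bool !expn_gt0.
Qed.
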